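(* Let $q>1$ and $a>0$. Define the probability distribution $p^{(a)}$ on $\mathbb{Z}$ by $$p^{(a)}_k=\begin{cases}f_q(a)^{-1}\Big(1-\dfrac{k^2}{a^2}\Big)^{\frac{1}{q-1}} & \text{if } |k|<a,\\ 0&\text{otherwise,}\end{cases}\qquad f_q(a)=\sum_{k\in\mathbb{Z},\,|k|<a}\Big(1-\frac{k^2}{a^2}\Big)^{\frac{1}{q-1}}.$$ Let $\sigma^2=\sum_k k^2p^{(a)}_k$. Then $p^{(a)}$ has zero mean and maximizes the Tsallis entropy $H_q$ over all probability distributions $p$ on $\mathbb{Z}$ satisfying $\sum_k k\,p_k=0$ and $\sum_k k^2p_k=\sigma^2$.
   Context: For a probability distribution $p=(p_k)_{k\in\mathbb{Z}}$ on $\mathbb{Z}$ and $q\neq 1$, the Tsallis entropy is $H_q(p)=\frac{1}{q-1}\big(1-\sum_{k\in\mathbb{Z}}p_k^q\big)$. *)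

From Stdlib Require Import Reals ZArith Lra.
From Coquelicot Require Import Coquelicot.
Open Scope R_scope.

(* Real power x^y for x >= 0, with the convention 0^y = 0 (y > 0 in all uses). *)
Definition rpow (x y : R) : R :=
  if Rlt_dec 0 x then Rpower x y else 0.

(* Sums over Z: split into k >= 0 and k <= -1. *)
Definition zsummable (f : Z -> R) : Prop :=
  ex_series (fun n : nat => Rabs (f (Z.of_nat n))) /\
  ex_series (fun n : nat => Rabs (f (- Z.of_nat n - 1)%Z)).

Definition zsum (f : Z -> R) : R :=
  Series (fun n : nat => f (Z.of_nat n)) + Series (fun n : nat => f (- Z.of_nat n - 1)%Z).

Definition is_prob_Z (p : Z -> R) : Prop :=
  (forall k, 0 <= p k) /\ zsummable p /\ zsum p = 1.

Definition tsallis (q : R) (p : Z -> R) : R :=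
  (1 - zsum (fun k => rpow (p k) q)) / (q - 1).

Definition zero_mean (p : Z -> R) : Prop :=
  zsummable (fun k => IZR k * p k) /\ zsum (fun k => IZR k * p k) = 0.

Definition second_moment_eq (p : Z -> R) (s2 : R) : Prop :=
  zsummable (fun k => IZR k ^ 2 * p k) /\ zsum (fun k => IZR k ^ 2 * p k) = s2.

Definition wq (q a : R) (k : Z) : R :=
  if Rlt_dec (Rabs (IZR k)) a then rpow (1 - IZR k ^ 2 / a ^ 2) (1 / (q - 1)) else 0.

Definition fq (q a : R) : R := zsum (wq q a).

Definition p_a (q a : R) (k : Z) : R := / fq q a * wq q a k.

Definition sigma2 (q a : R) : R := zsum (fun k => IZR k ^ 2 * p_a q a k).

(* For q > 1 the map x |-> x^q is convex, and p_a is built so that the slope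
   q p_a(k)^(q-1) of its tangent at p_a(k) equals q D (1 - k^2/a^2) with
   D = f_q(a)^(1-q), an affine function of k^2; outside the support, where
   p_a(k) = 0, this weight is <= 0, so x^q >= q D (1 - k^2/a^2) x still holds.
   Hence for every k and x >= 0,
     x^q >= p_a(k)^q + q D (1 - k^2/a^2) (x - p_a(k)),
   and summing at x = p_k the linear part vanishes whenever p has the same mass
   and the same second moment as p_a.  So sum_k p_k^q >= sum_k p_a(k)^q, which
   is the claim since H_q decreases with sum_k p_k^q. *)

From Stdlib Require Import Reals ZArith Lra Lia.
From Coquelicot Require Import Coquelicot.
Open Scope R_scope.

Lemma Series_zero : Series (fun _ : nat => 0) = 0.
Proof. rewrite (Series_ext _ (fun _ => 0 * 0)); [now rewrite Series_scal_l, Rmult_0_l | intros; ring]. Qed.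

Lemma ex_series_zero : ex_series (fun _ : nat => 0).
Proof.
  apply (ex_series_ext (fun n => scal 0 ((1/2) ^ n))); [intros n; apply Rmult_0_l|].
  apply (ex_series_scal_l 0 (fun n => (1/2) ^ n)), ex_series_geom.
  rewrite Rabs_right; lra.
Qed.

Lemma ex_series_eventually_zero (f : nat -> R) (N : nat) :
  (forall n, (N <= n)%nat -> f n = 0) -> ex_series f.
Proof.
  intros Hf. apply (ex_series_incr_n f N).
  apply (ex_series_ext (fun _ => 0)); [|apply ex_series_zero].
  intros n. rewrite Hf; [reflexivity | lia].
Qed.

Lemma Series_nonneg (f : nat -> R) :
  (forall n, 0 <= f n) -> ex_series f -> 0 <= Series f.
Proof.
  intros Hf Hex. rewrite <- Series_zero.
  apply Series_le; [intros n; split; [lra | apply Hf] | exact Hex].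
Qed.

Lemma Series_ge_term (f : nat -> R) (n : nat) :
  (forall n, 0 <= f n) -> ex_series f -> f n <= Series f.
Proof.
  intros Hf Hex.
  rewrite (Series_incr_n f (S n)); [|lia|exact Hex]. simpl.
  assert (0 <= Series (fun k => f (S (n + k)))).
  { apply Series_nonneg; [intros; apply Hf|].
    apply (ex_series_incr_n f (S n)) in Hex. exact Hex. }
  destruct n as [|n]; simpl in *; [lra|].
  assert (0 <= sum_f_R0 f n) by (apply cond_pos_sum; auto). lra.
Qed.

Lemma Z_nat_or_negsucc (k : Z) :
  (exists n, k = Z.of_nat n) \/ (exists n, k = (- Z.of_nat n - 1)%Z).
Proof.
  destruct (Z_le_gt_dec 0 k).
  - left. exists (Z.to_nat k). lia.
  - right. exists (Z.to_nat (- k - 1)). lia.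
Qed.

Lemma zsummable_le (f g : Z -> R) :
  (forall k, Rabs (f k) <= Rabs (g k)) -> zsummable g -> zsummable f.
Proof.
  intros Hfg [Hg1 Hg2].
  split; [eapply (@ex_series_le _ R_CompleteNormedModule); [|exact Hg1]
        | eapply (@ex_series_le _ R_CompleteNormedModule); [|exact Hg2]];
    intros n; change norm with Rabs; simpl; rewrite Rabs_Rabsolu; apply Hfg.
Qed.

Lemma zsummable_ext (f g : Z -> R) :
  (forall k, f k = g k) -> zsummable g -> zsummable f.
Proof. intros Hfg. apply zsummable_le. intros k. rewrite Hfg. lra. Qed.

Lemma zsummable_plus (f g : Z -> R) :
  zsummable f -> zsummable g -> zsummable (fun k => f k + g k).
Proof.
  intros [Hf1 Hf2] [Hg1 Hg2].
  split; [eapply (@ex_series_le _ R_CompleteNormedModule);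
           [|exact (ex_series_plus _ _ Hf1 Hg1)]
        | eapply (@ex_series_le _ R_CompleteNormedModule);
           [|exact (ex_series_plus _ _ Hf2 Hg2)]];
    intros n; change norm with Rabs; simpl; rewrite Rabs_Rabsolu; apply Rabs_triang.
Qed.

Lemma zsummable_scal (c : R) (f : Z -> R) :
  zsummable f -> zsummable (fun k => c * f k).
Proof.
  intros [Hf1 Hf2].
  split; [eapply ex_series_ext; [|exact (ex_series_scal_l (Rabs c) _ Hf1)]
        | eapply ex_series_ext; [|exact (ex_series_scal_l (Rabs c) _ Hf2)]];
    intros n; symmetry; apply Rabs_mult.
Qed.

Lemma zsum_ext (f g : Z -> R) : (forall k, f k = g k) -> zsum f = zsum g.
Proof.
  intros Hfg. unfold zsum.
  rewrite (Series_ext (fun n => f (Z.of_nat n)) (fun n => g (Z.of_nat n))),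
          (Series_ext (fun n => f _) (fun n => g (- Z.of_nat n - 1)%Z)); auto.
Qed.

Lemma zsum_plus (f g : Z -> R) :
  zsummable f -> zsummable g -> zsum (fun k => f k + g k) = zsum f + zsum g.
Proof.
  intros [Hf1 Hf2] [Hg1 Hg2]. unfold zsum.
  rewrite !Series_plus by (apply ex_series_Rabs; assumption). ring.
Qed.

Lemma zsum_scal (c : R) (f : Z -> R) : zsum (fun k => c * f k) = c * zsum f.
Proof. unfold zsum. rewrite !Series_scal_l. ring. Qed.

Lemma zsum_nonneg (f : Z -> R) :
  (forall k, 0 <= f k) -> zsummable f -> 0 <= zsum f.
Proof.
  intros Hf [Hf1 Hf2]. unfold zsum.
  assert (0 <= Series (fun n => f (Z.of_nat n)))
    by (apply Series_nonneg, ex_series_Rabs; auto).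
  assert (0 <= Series (fun n => f (- Z.of_nat n - 1)%Z))
    by (apply Series_nonneg, ex_series_Rabs; auto).
  lra.
Qed.

Lemma zsum_le (f g : Z -> R) :
  zsummable f -> zsummable g -> (forall k, f k <= g k) -> zsum f <= zsum g.
Proof.
  intros Hf Hg Hfg.
  assert (Hd : zsummable (fun k => g k + -1 * f k))
    by (apply zsummable_plus, zsummable_scal; assumption).
  assert (Hnn : 0 <= zsum (fun k => g k + -1 * f k))
    by (apply zsum_nonneg; [intros k; specialize (Hfg k); lra | exact Hd]).
  rewrite zsum_plus, zsum_scal in Hnn by (try apply zsummable_scal; assumption).
  lra.
Qed.

Lemma zsum_ge_term (f : Z -> R) (k : Z) :
  (forall k, 0 <= f k) -> zsummable f -> f k <= zsum f.
Proof.
  intros Hf [Hf1 Hf2]. unfold zsum.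
  assert (0 <= Series (fun n => f (Z.of_nat n)))
    by (apply Series_nonneg, ex_series_Rabs; auto).
  assert (0 <= Series (fun n => f (- Z.of_nat n - 1)%Z))
    by (apply Series_nonneg, ex_series_Rabs; auto).
  destruct (Z_nat_or_negsucc k) as [[n ->] | [n ->]].
  - pose proof (Series_ge_term (fun n => f (Z.of_nat n)) n
                  (fun n => Hf _) (ex_series_Rabs _ Hf1)). lra.
  - pose proof (Series_ge_term (fun n => f (- Z.of_nat n - 1)%Z) n
                  (fun n => Hf _) (ex_series_Rabs _ Hf2)). lra.
Qed.

Lemma zsummable_finite_support (f : Z -> R) (N : nat) :
  (forall k, (Z.of_nat N <= Z.abs k)%Z -> f k = 0) -> zsummable f.
Proof.
  intros Hf.
  split; apply (ex_series_eventually_zero _ N); intros n Hn;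
    rewrite Hf; [apply Rabs_R0 | lia | apply Rabs_R0 | lia].
Qed.

Lemma zsum_odd (f : Z -> R) :
  zsummable f -> (forall k, f (- k)%Z = - f k) -> zsum f = 0.
Proof.
  intros [Hf1 _] Hodd. unfold zsum.
  rewrite Series_incr_1 by (apply ex_series_Rabs; assumption).
  assert (Hf0 : f 0%Z = 0) by (specialize (Hodd 0%Z); simpl in Hodd; lra).
  rewrite (Series_ext (fun n => f (- Z.of_nat n - 1)%Z) (fun n => - f (Z.of_nat (S n)))).
  - rewrite Series_opp. simpl Z.of_nat. rewrite Hf0. ring.
  - intros n. rewrite <- Hodd. f_equal. lia.
Qed.

Lemma zsum_quadratic_weighted_diff (p r : Z -> R) (b c : R) :
  zsummable p -> zsummable r ->
  zsummable (fun k => IZR k ^ 2 * p k) -> zsummable (fun k => IZR k ^ 2 * r k) ->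
  zsummable (fun k => (b + c * IZR k ^ 2) * (p k - r k)) /\
  zsum (fun k => (b + c * IZR k ^ 2) * (p k - r k)) =
    b * (zsum p - zsum r) +
    c * (zsum (fun k => IZR k ^ 2 * p k) - zsum (fun k => IZR k ^ 2 * r k)).
Proof.
  intros Hp Hr Hp2 Hr2.
  set (lin := fun s : Z -> R => fun k => b * s k + c * (IZR k ^ 2 * s k)).
  assert (Hlin : forall s, zsummable s -> zsummable (fun k => IZR k ^ 2 * s k) ->
            zsummable (lin s) /\ zsum (lin s) = b * zsum s + c * zsum (fun k => IZR k ^ 2 * s k)).
  { intros s Hs Hs2. unfold lin.
    split; [|rewrite zsum_plus, !zsum_scal; [reflexivity | ..]];
      try apply zsummable_plus; apply zsummable_scal; assumption. }
  destruct (Hlin p Hp Hp2) as [Hlp Hsp], (Hlin r Hr Hr2) as [Hlr Hsr].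
  assert (Hg : forall k, (b + c * IZR k ^ 2) * (p k - r k) = lin p k + -1 * lin r k)
    by (intros k; unfold lin; ring).
  split.
  - apply (zsummable_ext _ _ Hg), zsummable_plus, zsummable_scal; assumption.
  - rewrite (zsum_ext _ _ Hg), zsum_plus, zsum_scal, Hsp, Hsr
      by (try apply zsummable_scal; assumption).
    ring.
Qed.

Lemma rpow_nonneg (x y : R) : 0 <= rpow x y.
Proof. unfold rpow. destruct (Rlt_dec 0 x); [left; apply exp_pos | lra]. Qed.

Lemma rpow_0_l (y : R) : rpow 0 y = 0.
Proof. unfold rpow. destruct (Rlt_dec 0 0); [lra | reflexivity]. Qed.

Lemma rpow_Rpower (x y : R) : 0 < x -> rpow x y = Rpower x y.
Proof. intros Hx. unfold rpow. destruct (Rlt_dec 0 x); [reflexivity | lra]. Qed.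

Lemma Rpower_succ (x y : R) : 0 < x -> Rpower x y = Rpower x (y - 1) * x.
Proof.
  intros Hx. rewrite <- (Rpower_1 x Hx) at 3. rewrite <- Rpower_plus.
  f_equal. ring.
Qed.

Lemma rpow_le_self (x q : R) : 1 <= q -> 0 <= x <= 1 -> rpow x q <= x.
Proof.
  intros Hq [Hx0 Hx1]. unfold rpow. destruct (Rlt_dec 0 x) as [Hx|]; [|lra].
  assert (Hle1 : Rpower x (q - 1) <= Rpower 1 (q - 1)) by (apply Rle_Rpower_l; lra).
  unfold Rpower at 2 in Hle1. rewrite ln_1, Rmult_0_r, exp_0 in Hle1.
  rewrite (Rpower_succ x q Hx). pose proof (exp_pos ((q - 1) * ln x)). nra.
Qed.

Lemma rpow_above_tangent (q x y : R) : 1 < q -> 0 <= x -> 0 < y ->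
  Rpower y q + q * Rpower y (q - 1) * (x - y) <= rpow x q.
Proof.
  intros Hq Hx Hy.
  destruct (Rle_lt_or_eq_dec 0 x Hx) as [Hx' | <-].
  2:{ rewrite rpow_0_l, (Rpower_succ y q Hy).
      assert (0 < Rpower y (q - 1)) by apply exp_pos.
      assert (0 <= Rpower y (q - 1) * y * (q - 1)) by (repeat apply Rmult_le_pos; lra).
      nra. }
  rewrite rpow_Rpower by exact Hx'.
  assert (Hd : forall c, 0 < c ->
            derivable_pt_lim (fun t => Rpower t q) c (q * Rpower c (q - 1)))
    by (intros c Hc; apply derivable_pt_lim_power, Hc).
  destruct (Rtotal_order x y) as [Hlt | [-> | Hgt]]; [| lra |].
  - destruct (MVT_cor2 (fun t => Rpower t q) (fun t => q * Rpower t (q - 1)) x y Hlt)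
      as [c [Hc Hmvt]]; [intros c Hc; apply Hd; lra|].
    assert (Rpower c (q - 1) < Rpower y (q - 1)) by (apply Rlt_Rpower_l; lra).
    assert (0 <= q * ((Rpower y (q - 1) - Rpower c (q - 1)) * (y - x)))
      by (apply Rmult_le_pos; [|apply Rmult_le_pos]; lra).
    lra.
  - destruct (MVT_cor2 (fun t => Rpower t q) (fun t => q * Rpower t (q - 1)) y x Hgt)
      as [c [Hc Hmvt]]; [intros c Hc; apply Hd; lra|].
    assert (Rpower y (q - 1) < Rpower c (q - 1)) by (apply Rlt_Rpower_l; lra).
    assert (0 <= q * ((Rpower c (q - 1) - Rpower y (q - 1)) * (x - y)))
      by (apply Rmult_le_pos; [|apply Rmult_le_pos]; lra).
    lra.
Qed.

Section MaximalDistribution.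

Variables q a : R.
Hypothesis hq : 1 < q.
Hypothesis ha : 0 < a.

Lemma wq_finite_support :
  exists N : nat, forall k, (Z.of_nat N <= Z.abs k)%Z -> wq q a k = 0.
Proof.
  exists (Z.to_nat (up a)). intros k Hk. unfold wq.
  destruct (Rlt_dec (Rabs (IZR k)) a) as [Hlt|]; [exfalso | reflexivity].
  rewrite Rabs_Zabs in Hlt. destruct (archimed a) as [Hup _].
  assert (IZR (up a) <= IZR (Z.abs k)) by (apply IZR_le; lia).
  lra.
Qed.

Lemma wq_nonneg (k : Z) : 0 <= wq q a k.
Proof. unfold wq. destruct (Rlt_dec _ _); [apply rpow_nonneg | lra]. Qed.

Lemma wq_inside (k : Z) : Rabs (IZR k) < a ->
  0 < 1 - IZR k ^ 2 / a ^ 2 /\ wq q a k = Rpower (1 - IZR k ^ 2 / a ^ 2) (1 / (q - 1)).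
Proof.
  intros Hk.
  assert (Hbase : 0 < 1 - IZR k ^ 2 / a ^ 2).
  { assert (IZR k ^ 2 < a ^ 2)
      by (rewrite <- (pow2_abs (IZR k)); pose proof (Rabs_pos (IZR k)); nra).
    apply Rlt_0_minus, (Rmult_lt_reg_r (a ^ 2)); [nra|].
    unfold Rdiv. rewrite Rmult_assoc, Rinv_l; nra. }
  split; [exact Hbase|].
  unfold wq. destruct (Rlt_dec _ _); [apply rpow_Rpower, Hbase | lra].
Qed.

Lemma wq_outside (k : Z) : ~ Rabs (IZR k) < a -> wq q a k = 0.
Proof. intros Hk. unfold wq. destruct (Rlt_dec _ _); [lra | reflexivity]. Qed.

Lemma wq_0 : wq q a 0%Z = 1.
Proof.
  destruct (wq_inside 0) as [_ ->]; [rewrite Rabs_R0; exact ha|].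
  replace (1 - IZR 0 ^ 2 / a ^ 2) with 1 by (simpl; field; lra).
  unfold Rpower. rewrite ln_1, Rmult_0_r. apply exp_0.
Qed.

Lemma wq_opp (k : Z) : wq q a (- k)%Z = wq q a k.
Proof.
  unfold wq. rewrite opp_IZR, Rabs_Ropp.
  replace ((- IZR k) ^ 2) with (IZR k ^ 2) by ring. reflexivity.
Qed.

Lemma fq_ge_1 : 1 <= fq q a.
Proof.
  rewrite <- wq_0. apply zsum_ge_term; [apply wq_nonneg|].
  destruct wq_finite_support as [N HN]. apply (zsummable_finite_support _ N HN).
Qed.

Lemma p_a_nonneg (k : Z) : 0 <= p_a q a k.
Proof.
  unfold p_a. pose proof fq_ge_1. pose proof (wq_nonneg k).
  apply Rmult_le_pos; [left; apply Rinv_0_lt_compat; lra | assumption].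
Qed.

Lemma zsummable_mul_p_a (g : Z -> R) : zsummable (fun k => g k * p_a q a k).
Proof.
  destruct wq_finite_support as [N HN]. apply (zsummable_finite_support _ N).
  intros k Hk. unfold p_a. rewrite HN by exact Hk. ring.
Qed.

Lemma p_a_Rpower_pred (k : Z) : Rabs (IZR k) < a ->
  0 < p_a q a k /\
  Rpower (p_a q a k) (q - 1) = Rpower (/ fq q a) (q - 1) * (1 - IZR k ^ 2 / a ^ 2).
Proof.
  intros Hk. destruct (wq_inside k Hk) as [Hbase Hw].
  assert (Hinv : 0 < / fq q a) by (apply Rinv_0_lt_compat; pose proof fq_ge_1; lra).
  assert (Hpow : 0 < Rpower (1 - IZR k ^ 2 / a ^ 2) (1 / (q - 1))) by apply exp_pos.
  unfold p_a. rewrite Hw.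
  split; [apply Rmult_lt_0_compat; assumption|].
  rewrite <- Rpower_mult_distr, Rpower_mult by assumption.
  replace (1 / (q - 1) * (q - 1)) with 1 by (field; lra).
  rewrite Rpower_1 by exact Hbase. reflexivity.
Qed.

Lemma rpow_p_a_tangent (k : Z) (x : R) : 0 <= x ->
  rpow (p_a q a k) q +
    q * Rpower (/ fq q a) (q - 1) * (1 - IZR k ^ 2 / a ^ 2) * (x - p_a q a k)
  <= rpow x q.
Proof.
  intros Hx. pose proof (rpow_nonneg x q) as Hxq.
  assert (HD : 0 < Rpower (/ fq q a) (q - 1)) by apply exp_pos.
  destruct (Rlt_dec (Rabs (IZR k)) a) as [Hk | Hk].
  - destruct (p_a_Rpower_pred k Hk) as [Hpos Hpow].
    rewrite rpow_Rpower by exact Hpos.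
    replace (q * Rpower (/ fq q a) (q - 1) * (1 - IZR k ^ 2 / a ^ 2))
      with (q * Rpower (p_a q a k) (q - 1)) by (rewrite Hpow; ring).
    apply rpow_above_tangent; assumption.
  - assert (Hz : p_a q a k = 0) by (unfold p_a; rewrite wq_outside by exact Hk; ring).
    rewrite Hz, rpow_0_l.
    assert (Hk2 : 1 <= IZR k ^ 2 / a ^ 2).
    { apply (Rmult_le_reg_r (a ^ 2)); [nra|].
      unfold Rdiv. rewrite Rmult_assoc, Rinv_l, <- (pow2_abs (IZR k)); nra. }
    assert (0 <= q * Rpower (/ fq q a) (q - 1) * (IZR k ^ 2 / a ^ 2 - 1) * x)
      by (repeat apply Rmult_le_pos; lra).
    nra.
Qed.

End MaximalDistribution.

Lemma is_prob_Z_le_1 (p : Z -> R) (k : Z) : is_prob_Z p -> p k <= 1.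
Proof. intros [Hp0 [Hsum Htot]]. rewrite <- Htot. apply zsum_ge_term; assumption. Qed.

Lemma zsummable_rpow_prob (p : Z -> R) (q : R) :
  1 <= q -> is_prob_Z p -> zsummable (fun k => rpow (p k) q).
Proof.
  intros Hq Hp. apply (zsummable_le _ p); [|apply Hp].
  intros k. pose proof (proj1 Hp k). pose proof (is_prob_Z_le_1 p k Hp).
  pose proof (rpow_nonneg (p k) q). pose proof (rpow_le_self (p k) q Hq).
  rewrite !Rabs_right; lra.
Qed.

Lemma is_prob_Z_p_a (q a : R) : 0 < a -> is_prob_Z (p_a q a).
Proof.
  intros ha. pose proof (fq_ge_1 q a ha).
  split; [exact (p_a_nonneg q a ha)|]. split.
  - apply (zsummable_ext _ (fun k => 1 * p_a q a k)); [intros; ring|].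
    apply zsummable_mul_p_a.
  - unfold p_a. rewrite zsum_scal. fold (fq q a). field. lra.
Qed.

Lemma zero_mean_p_a (q a : R) : zero_mean (p_a q a).
Proof.
  split; [apply zsummable_mul_p_a|].
  apply zsum_odd; [apply zsummable_mul_p_a|].
  intros k. unfold p_a. rewrite wq_opp, opp_IZR. ring.
Qed.

Lemma zsum_rpow_p_a_le (q a : R) (p : Z -> R) : 1 < q -> 0 < a ->
  is_prob_Z p -> second_moment_eq p (sigma2 q a) ->
  zsum (fun k => rpow (p_a q a k) q) <= zsum (fun k => rpow (p k) q).
Proof.
  intros hq ha Hp [Hp2 Hmom].
  set (D := Rpower (/ fq q a) (q - 1)).
  destruct (is_prob_Z_p_a q a ha) as [_ [Hsa Hta]].
  destruct (zsum_quadratic_weighted_diff p (p_a q a) (q * D) (- (q * D / a ^ 2))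
              (proj1 (proj2 Hp)) Hsa Hp2 (zsummable_mul_p_a q a _)) as [Hlin Hlin0].
  rewrite (proj2 (proj2 Hp)), Hta, Hmom in Hlin0. unfold sigma2 in Hlin0.
  assert (Hslope : forall k, q * D * (1 - IZR k ^ 2 / a ^ 2) =
                             q * D + - (q * D / a ^ 2) * IZR k ^ 2)
    by (intros k; field; lra).
  assert (Hsa_q : zsummable (fun k => rpow (p_a q a k) q))
    by (apply zsummable_rpow_prob; [lra | apply is_prob_Z_p_a, ha]).
  rewrite <- (Rplus_0_r (zsum _)).
  replace 0 with (zsum (fun k => (q * D + - (q * D / a ^ 2) * IZR k ^ 2) * (p k - p_a q a k)))
    by (rewrite Hlin0; ring).
  rewrite <- zsum_plus by assumption.
  apply zsum_le.
  - apply zsummable_plus; assumption.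
  - apply zsummable_rpow_prob; [lra | exact Hp].
  - intros k. rewrite <- Hslope. apply (rpow_p_a_tangent q a hq ha), Hp.
Qed.

Theorem theorem2 (q a : R) (hq : 1 < q) (ha : 0 < a) :
  is_prob_Z (p_a q a) /\
  zero_mean (p_a q a) /\
  second_moment_eq (p_a q a) (sigma2 q a) /\
  (forall p : Z -> R,
     is_prob_Z p -> zero_mean p -> second_moment_eq p (sigma2 q a) ->
     tsallis q p <= tsallis q (p_a q a)).
Proof.
  split; [apply is_prob_Z_p_a, ha|].
  split; [apply zero_mean_p_a|].
  split; [split; [apply zsummable_mul_p_a | reflexivity]|].
  intros p Hp _ Hmom. unfold tsallis, Rdiv.
  apply Rmult_le_compat_r; [left; apply Rinv_0_lt_compat; lra|].
  pose proof (zsum_rpow_p_a_le q a p hq ha Hp Hmom). lra.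
Qed.
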